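(* Let $m\ge3$, let $E^m$ and $O^m$ be the sets of even-parity and odd-parity $m$-bit strings, and let $A\subseteq E^m$. For $n\ge1$, let $m$ parties (the first being Alice) hold $X_j=(x^j_1,\dots,x^j_n)\in\{0,1\}^n$, $j=1,\dots,m$, under the promise that $x_i^1x_i^2\cdots x_i^m\in A\cup O^m$ for every $i$, and let $g_A(X_1,\dots,X_m)=\bigoplus_{i=1}^n t_A(x_i^1\cdots x_i^m)$, where $t_A(w)=1$ if $w\in A$ and $0$ otherwise. Then $g_A$ can be computed by a distributed protocol using only local classical operations, no a priori quantum entanglement, and $m-1$ classical bits of communication in total, at the end of which Alice knows the value of $g_A(X_1,\dots,X_m)$. *)

From mathcomp Require Import all_boot.
Set Implicit Arguments. Unset Strict Implicit. Unset Printing Implicit Defensive.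

Notation bitstring m := {ffun 'I_m -> bool}.

Definition parity m (w : bitstring m) : bool := \big[addb/false]_(j < m) w j.

Definition even_strings m : {set bitstring m} := [set w | ~~ parity w].
Definition odd_strings  m : {set bitstring m} := [set w | parity w].

(* inputs: party j (j : 'I_m) holds X j = (x^j_1, ..., x^j_n) *)
Definition inputs m n := 'I_m -> 'I_n -> bool.

Definition column m n (X : inputs m n) (i : 'I_n) : bitstring m :=
  [ffun j => X j i].

Definition t_A m (A : {set bitstring m}) (w : bitstring m) : bool := w \in A.

Definition g_A m n (A : {set bitstring m}) (X : inputs m n) : bool :=
  \big[addb/false]_(i < n) t_A A (column X i).

Definition promise m n (A : {set bitstring m}) (X : inputs m n) : Prop :=
  forall i : 'I_n, column X i \in A :|: odd_strings m.

(* A round: a sender transmits ONE classical bit to a receiver; the bit is a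
   function (local classical computation) of the sender's own input and of the
   sequence of bits the sender has received so far.  No shared entanglement
   (nor shared randomness) is available. *)
Record round (m n : nat) := Round {
  sender   : 'I_m;
  receiver : 'I_m;
  message  : ('I_n -> bool) -> seq bool -> bool }.

Record protocol (m n : nat) := Protocol {
  rounds : seq (round m n);
  output : ('I_n -> bool) -> seq bool -> bool }.

(* views: for each party, the sequence of bits it has received so far *)
Definition step m n (X : inputs m n) (v : 'I_m -> seq bool) (r : round m n)
  : 'I_m -> seq bool :=
  let b := message r (X (sender r)) (v (sender r)) in
  fun j => if j == receiver r then rcons (v j) b else v j.

Definition run m n (P : protocol m n) (X : inputs m n) : 'I_m -> seq bool :=
  foldl (step X) (fun _ => [::]) (rounds P).

(* total classical communication = number of bits sent *)
Definition cost m n (P : protocol m n) : nat := size (rounds P).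

Definition computes_for m n (P : protocol m n) (a : 'I_m)
  (Q : inputs m n -> Prop) (f : inputs m n -> bool) : Prop :=
  forall X : inputs m n, Q X -> output P (X a) (run P X a) = f X.

From mathcomp Require Import all_boot.

Set Implicit Arguments.
Unset Strict Implicit.
Unset Printing Implicit Defensive.

(** Under the promise, a column lies in [A] exactly when it has even parity,
    so [t_A] of a column is the negated parity of that column.  Hence [g_A] is
    [odd n] xor the parity of all [m * n] input bits, which is [odd n] xor the
    parities of the [m] rows: every party other than Alice sends the parity of
    its own row to Alice, one bit each. *)

Definition row_parity n (x : 'I_n -> bool) : bool := \big[addb/false]_(i < n) x i.

Lemma big_addb_negb (I : Type) (r : seq I) (F : I -> bool) :
  \big[addb/false]_(i <- r) ~~ F i = odd (size r) (+) \big[addb/false]_(i <- r) F i.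
Proof.
elim: r => [|i r IHr]; first by rewrite !big_nil.
by rewrite !big_cons IHr /= !addNb addbCA.
Qed.

Lemma t_A_promise m (A : {set bitstring m}) (w : bitstring m) :
  A \subset even_strings m -> w \in A :|: odd_strings m ->
  t_A A w = ~~ parity w.
Proof.
move=> /subsetP sAE; rewrite /t_A in_setU inE.
have [wA _ | _ /= -> //] := boolP (w \in A).
by move: (sAE _ wA); rewrite inE => ->.
Qed.

Lemma g_A_promise m n (A : {set bitstring m}) (X : inputs m n) :
  A \subset even_strings m -> promise A X ->
  g_A A X = odd n (+) \big[addb/false]_(j < m) row_parity (X j).
Proof.
move=> sAE hX.
have size_ord : size (index_enum 'I_n) = n.
  by rewrite /index_enum unlock -enumT size_enum_ord.
rewrite /g_A (eq_bigr (fun i => ~~ parity (column X i))); last first.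
  by move=> i _; apply: t_A_promise.
rewrite big_addb_negb size_ord exchange_big; congr (_ (+) _).
by apply: eq_bigr => i _; apply: eq_bigr => j _; rewrite ffunE.
Qed.

Section ParityProtocol.

Variables (m n : nat) (a : 'I_m).

Definition senders : seq 'I_m := enum (predC1 a).

Definition send_parity (j : 'I_m) : round m n :=
  Round j a (fun x _ => row_parity x).

Definition parity_protocol : protocol m n :=
  Protocol (map send_parity senders)
           (fun x bs => odd n (+) row_parity x (+) \big[addb/false]_(b <- bs) b).

Lemma size_senders : size senders = m - 1.
Proof. by rewrite -cardE cardC1 card_ord subn1. Qed.

Lemma cost_parity_protocol : cost parity_protocol = m - 1.
Proof. by rewrite /cost size_map size_senders. Qed.

Lemma foldl_send_parity (X : inputs m n) (s : seq 'I_m) v :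
  foldl (step X) v (map send_parity s) a = v a ++ [seq row_parity (X j) | j <- s].
Proof.
elim: s v => [|j s IHs] v /=; first by rewrite cats0.
by rewrite IHs /step /= eqxx cat_rcons.
Qed.

Lemma run_parity_protocol (X : inputs m n) :
  run parity_protocol X a = [seq row_parity (X j) | j <- senders].
Proof. exact: foldl_send_parity. Qed.

Lemma parity_protocol_correct (A : {set bitstring m}) :
  A \subset even_strings m -> computes_for parity_protocol a (promise A) (g_A A).
Proof.
move=> sAE X hX; rewrite g_A_promise // run_parity_protocol /= big_map.
by rewrite big_enum [in RHS](bigD1 a) //= -addbA.
Qed.

End ParityProtocol.

Theorem theorem7 (m : nat) (hm : 3 <= m)
  (A : {set {ffun 'I_m -> bool}}) (hA : A \subset even_strings m)
  (n : nat) (hn : 1 <= n) :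
  exists P : protocol m n,
    cost P = m - 1 /\
    forall alice : 'I_m, nat_of_ord alice = 0 ->
      computes_for P alice (promise A) (g_A A).
Proof.
have m_gt0 : 0 < m by apply: leq_trans hm.
pose alice0 : 'I_m := Ordinal m_gt0.
exists (parity_protocol n alice0); split; first exact: cost_parity_protocol.
move=> alice alice_eq0; have -> : alice = alice0 by apply: val_inj.
exact: parity_protocol_correct.
Qed.
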